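(* Let $(X,\rho,\mu)$ be a space of homogeneous type, $0<t<1$, and let $x_t$ be an $\varepsilon$-point with $\varepsilon=(2C_\mu)^{-3/t}$; let $u_t$ be the power weight centered at $x_t$. Then for every ball $B=B(x_t,R)$, $$u_t(B)=\int_Bu_t\,d\mu\lesssim\frac{\mu(B)^t}{t}.$$ If moreover $\mu(B(x_t,R))>\varepsilon^{-1}\mu(\{x_t\})$, then $u_t(B)\gtrsim\mu(B)^t/t$. The implicit constants depend only on $C_\mu$ (and $A_0$), not on $t$, $R$.
   Context: $(X,\rho,\mu)$ is a space of homogeneous type: $\rho$ a quasi-metric with $\rho(x,y)\le A_0(\rho(x,z)+\rho(z,y))$, $A_0\ge1$; balls $B(x,r)=\{y:\rho(x,y)<r\}$, with the convention $B(x,0)=\{x\}$; $\mu$ a positive Borel measure with $0<\mu(B(x,2r))\le C_\mu\mu(B(x,r))<\infty$, $C_\mu$ the smallest such constant. A point $x\in X$ is an $\varepsilon$-point ($\varepsilon>0$) if there is $R>0$ with $\mu(B(x,R))>\varepsilon^{-1}\mu(\{x\})$. For $0<t<1$ and a point $x_t$, the power weight is $u_t(x)=\mu(B(x_t,\rho(x,x_t)))^{-(1-t)}$. *)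

From HB Require Import structures.
From mathcomp Require Import all_boot all_order all_algebra.
From mathcomp Require Import all_classical all_reals all_analysis.
Set Implicit Arguments. Unset Strict Implicit. Unset Printing Implicit Defensive.
Import Order.TTheory GRing.Theory Num.Theory.
Local Open Scope classical_set_scope.
Local Open Scope ring_scope.

Section HT.
Context {d : measure_display} {X : measurableType d} {R : realType}.

Definition quasi_metric (rho : X -> X -> R) (A0 : R) : Prop :=
  [/\ 1 <= A0,
      (forall x y, 0 <= rho x y),
      (forall x y, rho x y = 0 <-> x = y),
      (forall x y, rho x y = rho y x) &
      (forall x y z, rho x y <= A0 * (rho x z + rho z y))].

Definition qball (rho : X -> X -> R) (x : X) (r : R) : set X :=
  if r == 0 then [set x] else [set y | rho x y < r].

Definition doubling (rho : X -> X -> R) (mu : set X -> \bar R) (C : R) : Prop :=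
  forall x r, 0 < r ->
    [/\ (0 < mu (qball rho x (2 * r)))%E,
        (mu (qball rho x (2 * r)) <= C%:E * mu (qball rho x r))%E &
        (mu (qball rho x r) < +oo)%E].

Definition homogeneous_type (rho : X -> X -> R) (A0 : R)
    (mu : {measure set X -> \bar R}) (C : R) : Prop :=
  [/\ quasi_metric rho A0,
      (forall x r, 0 <= r -> measurable (qball rho x r)),
      doubling rho mu C &
      (forall C', doubling rho mu C' -> C <= C')].

Definition eps_point (rho : X -> X -> R) (mu : set X -> \bar R) (eps : R)
    (x : X) : Prop :=
  exists R0 : R, 0 < R0 /\ (mu (qball rho x R0) > eps^-1%:E * mu [set x])%E.

(* Power weight u_t(x) = mu(B(x_t, rho(x, x_t)))^{-(1-t)}, with value +oo
   where the measure vanishes (only possible at x = x_t). *)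
Definition power_weight (rho : X -> X -> R) (mu : set X -> \bar R) (t : R)
    (xt : X) (x : X) : \bar R :=
  let m := mu (qball rho xt (rho x xt)) in
  if fine m == 0 then +oo%E else ((fine m) `^ (- (1 - t)))%:E.

End HT.

From HB Require Import structures.
From mathcomp Require Import all_boot all_order all_algebra.
From mathcomp Require Import all_classical all_reals all_analysis.
From mathcomp Require Import measurable_realfun ring lra.
Set Implicit Arguments. Unset Strict Implicit. Unset Printing Implicit Defensive.
Import Order.TTheory GRing.Theory Num.Theory numFieldNormedType.Exports.
Local Open Scope classical_set_scope.
Local Open Scope ring_scope.

(* Split B(x_t, R) into the atom {x_t} and the dyadic annuli
   A_k = B(x_t, R 2^-k) \ B(x_t, R 2^-(k+1)), and write m_k = mu(B(x_t, R 2^-k)).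
   On A_k doubling gives m_(k+1) <= mu(B(x_t, rho(x, x_t))) <= m_k <= C m_(k+1), so
   u_t lies between m_k^(t-1) and C m_k^(t-1), and the integral of u_t over A_k is
   comparable to m_k^(t-1) (m_k - m_(k+1)).  By concavity of s |-> s^t, that is
   comparable to (m_k^t - m_(k+1)^t) / t, which telescopes; the atom adds at most
   mu({x_t})^t.  For the lower bound, m_N decreases to mu({x_t}), and the
   eps-point condition with eps^(-t) = (2C)^3 >= 2 gives m_N^t <= mu(B)^t / 2 for
   N large. *)

Section PowerInequalities.
Variable R : realType.
Implicit Types (t p C theta a b x y z : R) (f : nat -> R).

Lemma ler_powRl t a b : 0 <= t -> 0 <= a -> a <= b -> a `^ t <= b `^ t.
Proof.
move=> t0 a0 ab; have b0 := le_trans a0 ab.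
by apply: (ge0_ler_powR t0) ab; rewrite nnegrE.
Qed.

Lemma powR_le_affine t z : 0 < t < 1 -> 0 <= z -> z `^ t <= t * z + (1 - t).
Proof.
move=> /andP[t0 t1] z0.
have := @conjugate_powR R (z `^ t) 1 t^-1 (1 - t)^-1 (powR_ge0 _ _) ler01.
rewrite invr_gt0 t0 invr_gt0 subr_gt0 t1 !invrK addrC subrK => /(_ isT isT erefl).
by rewrite mulr1 -powRrM mulfV ?gt_eqF // powRr1 // powR1 mul1r mulrC.
Qed.

Lemma powR_tangent t x y : 0 < t < 1 -> 0 < x -> 0 <= y ->
  y `^ t <= x `^ t + t * x `^ (t - 1) * (y - x).
Proof.
move=> t01 x0 y0; have t0 : 0 < t by case/andP: t01.
have yx0 : 0 <= y / x by rewrite divr_ge0 // ltW.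
have -> : y `^ t = x `^ t * (y / x) `^ t.
  by rewrite -powRM // ?ltW // mulrC divfK ?gt_eqF.
rewrite [leRHS](_ : _ = x `^ t * (t * (y / x) + (1 - t))); last first.
  by rewrite -(mulr_powRB1 (ltW x0) t0); field; rewrite gt_eqF.
by rewrite ler_wpM2l ?powR_ge0 // powR_le_affine.
Qed.

Lemma powR_subr_ge t a b : 0 < t < 1 -> 0 < a -> 0 <= b -> b <= a ->
  a `^ (t - 1) * (a - b) <= (a `^ t - b `^ t) / t.
Proof.
move=> t01 a0 b0 ba; have t0 : 0 < t by case/andP: t01.
have := powR_tangent t01 a0 b0; rewrite ler_pdivlMr //; lra.
Qed.

Lemma powR_subr_le t a b : 0 < t < 1 -> 0 < b -> b <= a ->
  (a `^ t - b `^ t) / t <= b `^ (t - 1) * (a - b).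
Proof.
move=> t01 b0 ba; have t0 : 0 < t by case/andP: t01.
have := powR_tangent t01 b0 (le_trans (ltW b0) ba); rewrite ler_pdivrMr //; lra.
Qed.

Lemma powR_nonincr p a b : p <= 0 -> 0 < a -> a <= b -> b `^ p <= a `^ p.
Proof.
move=> p0 a0 ab; have b0 := lt_le_trans a0 ab.
have -> : p = - (- p) by rewrite opprK.
rewrite (powRN a) (powRN b) lef_pV2 ?posrE ?powR_gt0 //.
by apply: ler_powRl; rewrite ?oppr_ge0 // ltW.
Qed.

Lemma powR_doubling t C a b : 0 < t -> 0 < a -> a <= b -> b <= C * a ->
  a `^ (t - 1) <= C * b `^ (t - 1).
Proof.
move=> t0 a0 ab bCa; have b0 := lt_le_trans a0 ab.
rewrite -(ler_pM2l a0) (mulr_powRB1 (ltW a0) t0).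
apply: le_trans (ler_powRl (ltW t0) (ltW a0) ab) _.
rewrite -(mulr_powRB1 (ltW b0) t0) mulrA [a * C]mulrC.
by apply: ler_wpM2r; rewrite ?powR_ge0.
Qed.

Lemma telescope_powR t f N :
  \sum_(0 <= k < N) (f k `^ t - f k.+1 `^ t) / t = (f 0 `^ t - f N `^ t) / t.
Proof.
rewrite (telescope_sumr_eq (fun k => - (f k `^ t / t))) //; last first.
  by move=> k _; rewrite mulrBl opprK addrC.
by rewrite opprK addrC mulrBl.
Qed.

Lemma sum_powR_steps_le t f N : 0 < t < 1 ->
    (forall k, 0 < f k) -> (forall k, f k.+1 <= f k) ->
  \sum_(0 <= k < N) f k `^ (t - 1) * (f k - f k.+1) <= (f 0 `^ t - f N `^ t) / t.
Proof.
move=> t01 f0 fS; rewrite -telescope_powR; apply: ler_sum => k _.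
exact: powR_subr_ge (ltW (f0 _)) (fS k).
Qed.

Lemma sum_powR_steps_ge t C f N : 0 < t < 1 -> 0 < C ->
    (forall k, 0 < f k) -> (forall k, f k.+1 <= f k) ->
    (forall k, f k <= C * f k.+1) ->
  (f 0 `^ t - f N `^ t) / (t * C) <= \sum_(0 <= k < N) f k `^ (t - 1) * (f k - f k.+1).
Proof.
move=> t01 C0 f0 fS fC; have t0 : 0 < t by case/andP: t01.
rewrite invfM mulrA -telescope_powR mulr_suml; apply: ler_sum => k _.
rewrite ler_pdivrMr //; apply: le_trans (powR_subr_le t01 (f0 _) (fS k)) _.
rewrite mulrAC; apply: ler_wpM2r; first by rewrite subr_ge0.
by rewrite mulrC; apply: powR_doubling.
Qed.

Lemma powR_le_half t theta a b : 0 < t -> 0 < theta -> 0 <= a ->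
  2 <= theta `^ t -> theta * a <= b -> a `^ t <= b `^ t / 2.
Proof.
move=> t0 th0 a0 th2 ab; rewrite ler_pdivlMr //.
have tha0 : 0 <= theta * a by rewrite mulr_ge0 // ltW.
apply: le_trans (ler_powRl (ltW t0) tha0 ab); rewrite powRM ?(ltW th0) // mulrC.
by rewrite ler_wpM2r ?powR_ge0.
Qed.

Lemma inv_eps_bounds t C : 1 <= C -> 0 < t < 1 ->
  1 <= ((2 * C) `^ (- (3 / t)))^-1 /\ 2 <= (((2 * C) `^ (- (3 / t)))^-1) `^ t.
Proof.
move=> C1 /andP[t0 _]; have C2 : 1 <= 2 * C by lra.
rewrite powRN invrK -powRrM divfK ?gt_eqF //; split.
  by rewrite -[X in X <= _](powRr0 (2 * C)) ler_powR // divr_ge0 // ltW.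
by apply: le_trans (le1r_powR C2 _); lra.
Qed.

End PowerInequalities.

(* The power weight need not be measurable (rho is not assumed measurable), but
   the integral of a nonnegative function is a supremum over simple functions
   below it, so it is monotone without measurability. *)
Lemma ge0_le_integral_nonmeasurable d (T : measurableType d) (R : realType)
    (mu : {measure set T -> \bar R}) (D : set T) (f g : T -> \bar R) :
  (forall x, D x -> (0 <= f x)%E) -> (forall x, D x -> (f x <= g x)%E) ->
  (\int[mu]_(x in D) f x <= \int[mu]_(x in D) g x)%E.
Proof.
move=> f0 fg.
have g0 x : D x -> (0 <= g x)%E by move=> Dx; exact: le_trans (f0 x Dx) (fg x Dx).
rewrite !(integral_mkcond D) !ge0_integralTE; try exact: erestrict_ge0.
apply: ereal_sup_le => _ [h hf <-]; exists h => //= x.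
exact: le_trans (hf x) (lee_restrict fg x).
Qed.

Section BallMeasure.
Context {d : measure_display} {X : measurableType d} {R : realType}.
Variables (rho : X -> X -> R) (A0 C : R) (mu : {measure set X -> \bar R}) (xt : X).
Hypothesis HT : homogeneous_type rho A0 mu C.
Implicit Types (r s c : R).

Let QM : quasi_metric rho A0. Proof. by case: HT. Qed.
Let DB : doubling rho mu C. Proof. by case: HT. Qed.

Lemma rho_ge0 x y : 0 <= rho x y. Proof. by case: QM. Qed.
Lemma rho_eq0 x y : rho x y = 0 <-> x = y. Proof. by case: QM. Qed.
Lemma rhoxx x : rho x x = 0. Proof. exact/rho_eq0. Qed.
Lemma rhoC x y : rho x y = rho y x. Proof. by case: QM. Qed.

Lemma rho_gt0 x y : x <> y -> 0 < rho x y.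
Proof. by move=> xy; rewrite lt0r rho_ge0 andbT; apply/eqP => /rho_eq0. Qed.

Lemma measurable_qball r : 0 <= r -> measurable (qball rho xt r).
Proof. by case: HT => _ + _ _; apply. Qed.

Lemma qball0 : qball rho xt 0 = [set xt]. Proof. by rewrite /qball eqxx. Qed.

Lemma qballE r : 0 < r -> qball rho xt r = [set y | rho xt y < r].
Proof. by move=> r0; rewrite /qball gt_eqF. Qed.

Lemma qball_sub r s : 0 <= r -> r <= s -> qball rho xt r `<=` qball rho xt s.
Proof.
move=> r0 rs; have [s0|s0] := eqVneq s 0.
  have -> : r = 0 by apply/eqP; rewrite eq_le r0 -s0 rs.
  by rewrite s0.
have s0' : 0 < s by rewrite lt0r s0 (le_trans r0).
rewrite (qballE s0') /qball; case: ifPn => [_ y -> /=|r0' y /= yr].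
  by rewrite rhoxx.
exact: lt_le_trans rs.
Qed.

Lemma qball_fin r : 0 <= r -> (mu (qball rho xt r) < +oo)%E.
Proof.
move=> r0; have [_ _ fin] := DB xt (ltr_wpDl r0 ltr01).
apply: le_lt_trans fin; apply: le_measure; rewrite ?inE.
- exact: measurable_qball.
- by apply: measurable_qball; lra.
- by apply: qball_sub => //; lra.
Qed.

Lemma qball_gt0 r : 0 < r -> (0 < mu (qball rho xt r))%E.
Proof.
move=> r0; have [+ _ _] := DB xt (divr_gt0 r0 (ltr0n _ 2)).
by rewrite mulrC divfK.
Qed.

Definition vol r := fine (mu (qball rho xt r)).

Lemma volE r : 0 <= r -> mu (qball rho xt r) = (vol r)%:E.
Proof. by move=> r0; rewrite /vol fineK // ge0_fin_numE ?qball_fin. Qed.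

Lemma mu_set1 : mu [set xt] = (vol 0)%:E.
Proof. by rewrite -qball0 volE. Qed.

Lemma vol_ge0 r : 0 <= vol r. Proof. exact: fine_ge0. Qed.

Lemma vol_gt0 r : 0 < r -> 0 < vol r.
Proof. by move=> r0; rewrite -lte_fin -(volE (ltW r0)) qball_gt0. Qed.

Lemma le_vol r s : 0 <= r -> r <= s -> vol r <= vol s.
Proof.
move=> r0 rs; have s0 := le_trans r0 rs.
rewrite -lee_fin -!volE //; apply: le_measure; rewrite ?inE.
- exact: measurable_qball.
- exact: measurable_qball.
- exact: qball_sub.
Qed.

Lemma vol_doubling r : 0 < r -> vol (2 * r) <= C * vol r.
Proof.
move=> r0; have [_ + _] := DB xt r0.
rewrite (volE (ltW r0)) volE; last by rewrite mulr_ge0 // ltW.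
by rewrite -EFinM lee_fin.
Qed.

Lemma doubling_const_ge1 : 1 <= C.
Proof.
have v1 := vol_gt0 ltr01; rewrite -(ler_pM2r v1) mul1r.
by apply: le_trans (vol_doubling ltr01); apply: le_vol => //; lra.
Qed.

Lemma doubling_const_gt0 : 0 < C.
Proof. exact: lt_le_trans ltr01 doubling_const_ge1. Qed.

Lemma measurable_center : measurable [set xt].
Proof. by rewrite -qball0; exact: measurable_qball. Qed.

Section PowerWeight.
Variable t : R.
Hypothesis t01 : 0 < t < 1.
Let u := power_weight rho mu t xt.

Lemma power_weightE x :
  u x = if vol (rho xt x) == 0 then +oo%E else (vol (rho xt x) `^ (t - 1))%:E.
Proof. by rewrite /u /power_weight rhoC opprB. Qed.

Lemma power_weight_ge0 x : (0 <= u x)%E.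
Proof. by rewrite power_weightE; case: ifP => // _; rewrite lee_fin powR_ge0. Qed.

Lemma integral_atom_le (D : set X) : measurable D -> D xt ->
  (\int[mu]_(x in D) (u xt * (\1_[set xt] x)%:E) <= (vol 0 `^ t)%:E)%E.
Proof.
move=> mD Dxt; have t0 : 0 < t by case/andP: t01.
have m1 : measurable_fun D (fun x => (\1_[set xt] x)%:E : \bar R).
  by apply/measurable_EFinP; apply: measurable_indic; exact: measurable_center.
rewrite (ge0_integralZl _ mD m1); last 2 first.
- by move=> x _; rewrite lee_fin indicE; case: (x \in _).
- exact: power_weight_ge0.
rewrite integral_indic //; last exact: measurable_center.
rewrite setIidl; last by move=> x ->.
(* If mu {xt} = 0, then u xt = +oo, but +oo * 0 = 0. *)
rewrite mu_set1 power_weightE rhoxx; case: ifPn => [/eqP ->|_].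
  by rewrite mule0 lee_fin powR_ge0.
by rewrite -EFinM lee_fin mulrC mulr_powRB1 // vol_ge0.
Qed.

Section DyadicAnnuli.
Variable R0 : R.
Hypothesis R0_gt0 : 0 < R0.

Definition radius k := R0 / 2 ^+ k.

Definition annulus k := qball rho xt (radius k) `\` qball rho xt (radius k.+1).

Lemma radius_gt0 k : 0 < radius k. Proof. by rewrite divr_gt0 // exprn_gt0. Qed.

Lemma radius0 : radius 0 = R0. Proof. by rewrite /radius expr0 divr1. Qed.

Lemma radiusS k : radius k = 2 * radius k.+1.
Proof. by rewrite /radius exprS; field; rewrite expf_neq0. Qed.

Lemma radius_le j k : (j <= k)%N -> radius k <= radius j.
Proof.
move=> /subnK <-; elim: (k - j)%N => [|n IH]; first by rewrite add0n.
by apply: le_trans IH; rewrite addSn [leRHS]radiusS; have := radius_gt0 (n + j).+1; lra.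
Qed.

Lemma radius_small r : 0 < r -> exists n, radius n.+1 <= r.
Proof.
move=> r0; have h := archi_boundP (ltW (divr_gt0 R0_gt0 r0)).
exists (Num.bound (R0 / r)); rewrite /radius ler_pdivrMr ?exprn_gt0 //.
rewrite mulrC -ler_pdivrMr //; apply: (le_trans (ltW h)).
rewrite -natrX ler_nat; apply: ltnW; apply: leq_trans (@ltn_expl 2 _ isT) _.
by rewrite leq_exp2l.
Qed.

Lemma annulusE k x : annulus k x <-> radius k.+1 <= rho xt x < radius k.
Proof.
rewrite /annulus !qballE ?radius_gt0 //=; split.
  by move=> [xk /negP]; rewrite -leNgt xk andbT.
by move=> /andP[kx xk]; split => //; apply/negP; rewrite -leNgt.
Qed.

Lemma measurable_annulus k : measurable (annulus k).
Proof. by apply: measurableD; apply: measurable_qball; exact: ltW (radius_gt0 _). Qed.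

Lemma annulus_sub k : annulus k `<=` qball rho xt R0.
Proof.
move=> x /annulusE /andP[_ xk]; rewrite qballE //=.
by apply: lt_le_trans xk _; rewrite -radius0 radius_le.
Qed.

Lemma annulus_uniq j k x : annulus j x -> annulus k x -> j = k.
Proof.
move=> /annulusE /andP[jx xj] /annulusE /andP[kx xk].
by apply/eqP; rewrite eqn_leq; apply/andP; split; rewrite leqNgt;
  apply/negP => /radius_le; lra.
Qed.

Lemma annulus_cover x : x <> xt -> qball rho xt R0 x -> exists k, annulus k x.
Proof.
move=> xxt; rewrite qballE //= => xR.
have [n nx nmin] := ex_minnP (radius_small (rho_gt0 (nesym xxt))).
exists n; apply/annulusE; rewrite nx /=.
case: n nx nmin => [|k] _ nmin; first by rewrite radius0.
by rewrite ltNge; apply/negP => /nmin; rewrite ltnn.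
Qed.

Lemma bigcap_qball_radius : \bigcap_n qball rho xt (radius n) = [set xt].
Proof.
apply/seteqP; split => [x xB|_ -> n _].
  apply: contrapT => xxt; have [n rn] := radius_small (rho_gt0 (nesym xxt)).
  by have := xB n.+1 I; rewrite (qballE (radius_gt0 _)) /=; lra.
by rewrite (qballE (radius_gt0 n)) /= rhoxx radius_gt0.
Qed.

Lemma mu_annulus k : mu (annulus k) = (vol (radius k) - vol (radius k.+1))%:E.
Proof.
have r0 j := ltW (radius_gt0 j).
rewrite measureD; try exact: measurable_qball; last exact: qball_fin.
rewrite setIidr; last exact: qball_sub (radius_le (leqnSn k)).
by rewrite EFinB -!volE.
Qed.

Lemma vol_radius_gt0 k : 0 < vol (radius k).
Proof. exact: vol_gt0 (radius_gt0 k). Qed.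

Lemma vol_radiusS_le k : vol (radius k.+1) <= vol (radius k).
Proof. exact: le_vol (ltW (radius_gt0 _)) (radius_le (leqnSn k)). Qed.

Lemma vol_radius_doubling k : vol (radius k) <= C * vol (radius k.+1).
Proof. by rewrite radiusS; apply: vol_doubling; exact: radius_gt0. Qed.

Lemma vol_radius_cvg : vol \o radius @ \oo --> vol 0.
Proof.
have := @nonincreasing_cvg_mu _ _ _ mu (fun n => qball rho xt (radius n)).
rewrite bigcap_qball_radius mu_set1 => /(_ (qball_fin (ltW (radius_gt0 0)))).
have mxt : measurable [set xt] by rewrite -qball0; exact: measurable_qball.
move=> /(_ (fun n => measurable_qball (ltW (radius_gt0 n))) mxt).
have nonincr : nonincreasing_seq (fun n => qball rho xt (radius n)).
  move=> a b ab; apply/subsetPset; apply: qball_sub (radius_le ab).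
  exact: ltW (radius_gt0 _).
by move=> /(_ nonincr) /fine_cvgP[].
Qed.

Lemma power_weight_annulus k x : annulus k x ->
  ((vol (radius k) `^ (t - 1))%:E <= u x <= (C * vol (radius k) `^ (t - 1))%:E)%E.
Proof.
move=> /annulusE /andP[kx xk]; have /andP[t0 t1] := t01.
have rx0 : 0 < rho xt x := lt_le_trans (radius_gt0 _) kx.
have vx0 : 0 < vol (rho xt x) := vol_gt0 rx0.
have vx_le : vol (rho xt x) <= vol (radius k) := le_vol (ltW rx0) (ltW xk).
have vk_le : vol (radius k) <= C * vol (rho xt x).
  apply: le_trans (vol_radius_doubling k) _.
  apply: ler_wpM2l; first exact: le_trans ler01 doubling_const_ge1.
  exact: le_vol (ltW (radius_gt0 _)) kx.
rewrite power_weightE gt_eqF // !lee_fin; apply/andP; split.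
  by apply: powR_nonincr => //; rewrite subr_le0 ltW.
exact: powR_doubling.
Qed.

Lemma integral_annulus_step c k : 0 <= c ->
  (\int[mu]_(x in qball rho xt R0) (c%:E * (\1_(annulus k) x)%:E)
     = (c * (vol (radius k) - vol (radius k.+1)))%:E)%E.
Proof.
move=> c0; have mB := measurable_qball (ltW R0_gt0).
have m1 : measurable_fun (qball rho xt R0) (fun x => (\1_(annulus k) x)%:E : \bar R).
  by apply/measurable_EFinP; apply: measurable_indic; exact: measurable_annulus.
rewrite (ge0_integralZl _ mB m1); last 2 first.
- by move=> x _; rewrite lee_fin indicE; case: (x \in _).
- by rewrite lee_fin.
rewrite integral_indic ?setIidl //; last exact: measurable_annulus.
  by rewrite mu_annulus -EFinM.
exact: annulus_sub.
Qed.

Let majorant n x : \bar R :=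
  if n is k.+1 then ((C * vol (radius k) `^ (t - 1))%:E * (\1_(annulus k) x)%:E)%E
  else (u xt * (\1_[set xt] x)%:E)%E.

Let majorant_ge0 n x : (0 <= majorant n x)%E.
Proof.
have C0 := ltW doubling_const_gt0.
by case: n => [|k] /=; apply: mule_ge0; rewrite ?power_weight_ge0 ?lee_fin ?indicE
  ?mulr_ge0 ?powR_ge0 //; case: (x \in _).
Qed.

Let measurable_majorant n : measurable_fun (qball rho xt R0) (majorant n).
Proof.
case: n => [|k] /=; apply: measurable_funeM; apply/measurable_EFinP;
  apply: measurable_indic; [exact: measurable_center|exact: measurable_annulus].
Qed.

Let power_weight_le_majorant x : qball rho xt R0 x ->
  (u x <= \sum_(n <oo) majorant n x)%E.
Proof.
move=> Bx; have [->|xxt] := pselect (x = xt).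
  apply: le_trans (nneseries_lim_ge 1 (fun n _ _ => majorant_ge0 n xt)).
  by rewrite big_nat1 /= indicE mem_set // mule1.
have [k xk] := annulus_cover xxt Bx.
apply: le_trans (nneseries_lim_ge k.+2 (fun n _ _ => majorant_ge0 n x)).
rewrite big_nat_recr //= indicE mem_set // mule1.
apply: lee_paddl; first by apply: sume_ge0 => n _; exact: majorant_ge0.
by case/andP: (power_weight_annulus xk).
Qed.

Let sum_integral_majorant_le N :
  (\sum_(0 <= n < N) \int[mu]_(x in qball rho xt R0) majorant n x
     <= (vol 0 `^ t + C * vol R0 `^ t / t)%:E)%E.
Proof.
have /andP[t0 _] := t01; have C0 := ltW doubling_const_gt0.
case: N => [|N].
  rewrite big_geq // lee_fin addr_ge0 ?powR_ge0 //.
  exact: divr_ge0 (mulr_ge0 C0 (powR_ge0 _ _)) (ltW t0).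
rewrite big_nat_recl //= EFinD; apply: leeD.
  by apply: integral_atom_le; [exact: measurable_qball (ltW R0_gt0)|
    rewrite (qballE R0_gt0) /= rhoxx].
rewrite (eq_bigr _ (fun k _ => integral_annulus_step _ (mulr_ge0 C0 (powR_ge0 _ _)))).
rewrite sumEFin lee_fin; under eq_bigr do rewrite -mulrA.
rewrite -mulr_sumr -mulrA ler_wpM2l //.
apply: le_trans (sum_powR_steps_le _ t01 vol_radius_gt0 vol_radiusS_le) _.
rewrite radius0 ler_wpM2r ?invr_ge0 //; first exact: ltW.
by rewrite gerBl powR_ge0.
Qed.

Lemma integral_power_weight_le :
  (\int[mu]_(x in qball rho xt R0) u x
     <= (vol 0 `^ t + C * vol R0 `^ t / t)%:E)%E.
Proof.
have mB := measurable_qball (ltW R0_gt0).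
apply: le_trans (ge0_le_integral_nonmeasurable mu (fun x _ => power_weight_ge0 x)
  power_weight_le_majorant) _.
rewrite (@integral_nneseries _ _ _ mu _ mB majorant measurable_majorant); last first.
  by move=> n x _; exact: majorant_ge0.
apply: lime_le; last exact: nearW sum_integral_majorant_le.
by apply: is_cvg_nneseries => n _ _; apply: integral_ge0 => x _; exact: majorant_ge0.
Qed.

Let minorant k x : \bar R :=
  ((vol (radius k) `^ (t - 1))%:E * (\1_(annulus k) x)%:E)%E.

Let minorant_ge0 k x : (0 <= minorant k x)%E.
Proof. by apply: mule_ge0; rewrite lee_fin ?powR_ge0 // indicE; case: (x \in _). Qed.

Let minorant_out k x : ~ annulus k x -> minorant k x = 0%E.
Proof. by move=> xk; rewrite /minorant indicE memNset ?mule0. Qed.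

Let sum_minorant_le_power_weight N x :
  (\sum_(0 <= k < N) minorant k x <= u x)%E.
Proof.
have [[j [jN xj]]|none] := pselect (exists j, (j < N)%N /\ annulus j x).
  rewrite (bigD1_seq j) ?iota_uniq ?mem_index_iota //= big1 ?adde0.
    by rewrite /minorant indicE mem_set // mule1; case/andP: (power_weight_annulus xj).
  by move=> i /eqP ij; apply: minorant_out => xi; apply: ij; exact: annulus_uniq xi xj.
rewrite big_seq big1 ?power_weight_ge0 // => i; rewrite mem_index_iota => /andP[_ iN].
by apply: minorant_out => xi; apply: none; exists i.
Qed.

Lemma integral_power_weight_ge N :
  (((vol R0 `^ t - vol (radius N) `^ t) / (t * C))%:E
     <= \int[mu]_(x in qball rho xt R0) u x)%E.
Proof.
have sum_minorant_ge0 x : qball rho xt R0 x -> (0 <= \sum_(0 <= k < N) minorant k x)%E.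
  by move=> _; apply: sume_ge0 => k _.
apply: le_trans (ge0_le_integral_nonmeasurable mu sum_minorant_ge0
  (fun x _ => sum_minorant_le_power_weight N x)).
have mB := measurable_qball (ltW R0_gt0).
have measurable_minorant k : measurable_fun (qball rho xt R0) (minorant k).
  by apply: measurable_funeM; apply/measurable_EFinP; apply: measurable_indic;
    exact: measurable_annulus.
rewrite (@ge0_integral_sum _ _ _ mu _ mB _ minorant measurable_minorant
  (fun k x _ => minorant_ge0 k x)).
rewrite (eq_bigr _ (fun k _ => integral_annulus_step _ (powR_ge0 _ _))) sumEFin lee_fin.
rewrite -[in vol R0]radius0.
exact: sum_powR_steps_ge t01 doubling_const_gt0 vol_radius_gt0 vol_radiusS_le
  vol_radius_doubling.
Qed.

End DyadicAnnuli.

Lemma integral_power_weight_qball_le (R0 : R) : 0 <= R0 ->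
  (\int[mu]_(x in qball rho xt R0) u x <= ((C + 1) * vol R0 `^ t / t)%:E)%E.
Proof.
move=> R00; have /andP[t0 t1] := t01.
have v0t : vol 0 `^ t <= vol R0 `^ t / t.
  apply: le_trans (ler_powRl (ltW t0) (vol_ge0 0) (le_vol (lexx 0) R00)) _.
  by rewrite ler_pdivlMr // ler_piMr ?powR_ge0 // ltW.
rewrite mulrDl mul1r mulrDl addrC.
have [R0_eq0|R0_neq0] := eqVneq R0 0; last first.
  have R0_gt0 : 0 < R0 by rewrite lt0r R0_neq0.
  by apply: le_trans (integral_power_weight_le R0_gt0) _; rewrite lee_fin lerD2r.
rewrite R0_eq0 qball0 in v0t *.
apply: le_trans (le_trans _ (integral_atom_le measurable_center erefl)) _.
  apply: ge0_le_integral_nonmeasurable => [x _|x ->]; first exact: power_weight_ge0.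
  by rewrite indicE mem_set // mule1.
rewrite lee_fin -[X in X <= _]addr0 lerD //.
exact: divr_ge0 (mulr_ge0 (ltW doubling_const_gt0) (powR_ge0 _ _)) (ltW t0).
Qed.

Lemma integral_power_weight_qball_ge (R0 theta : R) : 0 <= R0 -> 1 <= theta ->
    2 <= theta `^ t -> theta * vol 0 < vol R0 ->
  (((2 * C)^-1 * vol R0 `^ t / t)%:E <= \int[mu]_(x in qball rho xt R0) u x)%E.
Proof.
move=> R00 th1 th2 th_lt; have /andP[t0 _] := t01.
have C0 := doubling_const_gt0; have th0 : 0 < theta := lt_le_trans ltr01 th1.
have R0_gt0 : 0 < R0.
  rewrite lt0r R00 andbT; apply: contraTneq th_lt => ->.
  by rewrite -leNgt ler_peMl ?vol_ge0.
have : vol 0 < vol R0 / theta by rewrite ltr_pdivlMr // mulrC.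
move=> /(cvgr_lt _ (vol_radius_cvg R0_gt0)) [N _ /(_ N (leqnn N)) /= small].
have half : vol (radius R0 N) `^ t <= vol R0 `^ t / 2.
  apply: (powR_le_half t0 th0 (vol_ge0 _) th2).
  by rewrite mulrC -ler_pdivlMr //; apply: ltW.
apply: le_trans (integral_power_weight_ge R0_gt0 N); rewrite lee_fin.
have -> : (2 * C)^-1 * vol R0 `^ t / t = vol R0 `^ t / 2 / (t * C).
  by field; rewrite !gt_eqF.
by rewrite ler_wpM2r ?invr_ge0 ?mulr_ge0 ?(ltW t0) ?(ltW C0) //; lra.
Qed.

End PowerWeight.
End BallMeasure.

Theorem lemma8p3 (R : realType) (A0 C : R) :
  1 <= A0 ->
  exists c1 c2 : R, 0 < c1 /\ 0 < c2 /\
  forall (d : measure_display) (X : measurableType d) (rho : X -> X -> R)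
         (mu : {measure set X -> \bar R}) (t : R) (xt : X),
    homogeneous_type rho A0 mu C ->
    0 < t < 1 ->
    eps_point rho mu ((2 * C) `^ (- (3 / t))) xt ->
    forall R0 : R, 0 <= R0 ->
      let B := qball rho xt R0 in
      (\int[mu]_(x in B) power_weight rho mu t xt x
         <= (c1 * (fine (mu B)) `^ t / t)%:E)%E /\
      ((mu B > ((2 * C) `^ (- (3 / t)))^-1%:E * mu [set xt])%E ->
       ((c2 * (fine (mu B)) `^ t / t)%:E
         <= \int[mu]_(x in B) power_weight rho mu t xt x)%E).
Proof.
(* c1 and c2 are chosen before 1 <= C is known, hence `|C|. *)
move=> _; have C_abs := normr_ge0 C.
exists (`|C| + 1), (2 * (`|C| + 1))^-1; split; first lra.
split; first by rewrite invr_gt0; lra.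
move=> d X rho mu t xt HT t01 _ R0 R00 B.
have C1 := doubling_const_ge1 xt HT.
rewrite ger0_norm; last lra.
have [th1 th2] := inv_eps_bounds C1 t01.
split; first exact: (integral_power_weight_qball_le xt HT t01 R00).
rewrite /B (volE xt HT R00) (mu_set1 xt HT) -EFinM lte_fin => lt_eps.
apply: le_trans (integral_power_weight_qball_ge HT t01 R00 th1 th2 lt_eps).
have /andP[t0 _] := t01.
rewrite lee_fin /=; apply: ler_wpM2r; first by rewrite invr_ge0 ltW.
by apply: ler_wpM2r; rewrite ?powR_ge0 // lef_pV2 ?posrE; lra.
Qed.
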